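(* Let $p,p'\ge1$ be integers with $|p-p'|=1$ and $\alpha=\alpha_{(p,p')}$. If $X$ is a palindrome that is a factor of a Sturmian word, then $b\,\alpha(X)$ is a palindrome. Conversely, if $X$ is a palindrome such that $Xb$ is block-complete, then $\alpha^{-1}(Xb)$ is a palindrome.
   Context: $\alpha_{(p,p')}$ is the morphism on $\{a,b\}^*$ with $a\mapsto a^pb$, $b\mapsto a^{p'}b$. A Sturmian word is a right-infinite aperiodic word over $\{a,b\}$ with exactly $n+1$ factors of each length $n$. A palindrome is a word equal to its reverse. A word is block-complete (for $\alpha$) if it is a concatenation of the blocks $a^pb$ and $a^{p'}b$, i.e. equals $\alpha(Z)$ for some word $Z$; for such a word $W$, $\alpha^{-1}(W)$ denotes the unique $Z$ with $\alpha(Z)=W$. *)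

From HB Require Import structures.
From mathcomp Require Import all_boot.
Set Implicit Arguments. Unset Strict Implicit. Unset Printing Implicit Defensive.

Inductive letter := la | lb.

Definition letter_eqb (x y : letter) : bool :=
  match x, y with la, la | lb, lb => true | _, _ => false end.
Lemma letter_eqP : Equality.axiom letter_eqb.
Proof. by case; case; constructor. Qed.
HB.instance Definition _ := hasDecEq.Build letter letter_eqP.

Definition word := seq letter.
Definition infword := nat -> letter.

Definition palindrome (w : word) : Prop := rev w = w.

Definition factor_at (w : infword) (i n : nat) : word := mkseq (fun k => w (i + k)) n.

Definition is_factor (u : word) (w : infword) : Prop :=
  exists i, u = factor_at w i (size u).

Definition aperiodic (w : infword) : Prop :=
  ~ exists q N, 0 < q /\ forall i, N <= i -> w (i + q) = w i.

Definition has_n_plus_1_factors (w : infword) (n : nat) : Prop :=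
  exists s : seq word, uniq s /\ size s = n.+1 /\
    forall u : word, (exists i, u = factor_at w i n) <-> u \in s.

Definition sturmian (w : infword) : Prop :=
  aperiodic w /\ forall n, has_n_plus_1_factors w n.

Definition factor_of_sturmian (u : word) : Prop :=
  exists w, sturmian w /\ is_factor u w.

Definition alpha (p p' : nat) (Z : word) : word :=
  flatten (map (fun c => match c with
                         | la => rcons (nseq p la) lb
                         | lb => rcons (nseq p' la) lb end) Z).

Definition block_complete (p p' : nat) (W : word) : Prop :=
  exists Z, alpha p p' Z = W.

From mathcomp Require Import all_boot zify.

(* Every block a^k b ends with b, so reading [b alpha(Z)] backwards yields the
   blocks of [alpha(rev Z)] preceded by b: [b alpha(.)] commutes with reversal.
   Since alpha is injective when p <> p', palindromicity of [b alpha(Z)] is then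
   equivalent to that of Z. Neither direction uses the Sturmian hypothesis nor
   |p - p'| = 1 beyond p <> p'. *)

Definition block_exponent (p p' : nat) (c : letter) : nat :=
  if c is la then p else p'.

Lemma alpha_cons p p' c Z :
  alpha p p' (c :: Z) = nseq (block_exponent p p' c) la ++ lb :: alpha p p' Z.
Proof. by case: c; rewrite /alpha /= cat_rcons. Qed.

Lemma alpha_cat p p' s t : alpha p p' (s ++ t) = alpha p p' s ++ alpha p p' t.
Proof. by rewrite /alpha map_cat flatten_cat. Qed.

Lemma rev_cons_lb_alpha p p' Z :
  rev (lb :: alpha p p' Z) = lb :: alpha p p' (rev Z).
Proof.
elim: Z => [//|c Z IH].
rewrite alpha_cons -cat_cons rev_cat IH rev_cons rev_nseq.
by rewrite rev_cons -(cats1 (rev Z)) alpha_cat alpha_cons /= -cats1.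
Qed.

Lemma nseq_la_lb_inj k1 k2 (s t : word) :
  nseq k1 la ++ lb :: s = nseq k2 la ++ lb :: t -> k1 = k2 /\ s = t.
Proof.
elim: k1 k2 => [|k1 IH] [|k2] //= [].
- by move->.
- by move=> /IH [-> ->].
Qed.

Lemma alpha_inj p p' : p <> p' -> injective (alpha p p').
Proof.
move=> neq_pp'; elim=> [|c Z IH] [|d W] //.
- by rewrite alpha_cons; case: (block_exponent p p' d).
- by rewrite alpha_cons; case: (block_exponent p p' c).
rewrite !alpha_cons => /nseq_la_lb_inj [eq_exp /IH ->].
by case: c d eq_exp => [] [] // /esym.
Qed.

Lemma palindrome_cons_lb_alpha p p' Z :
  palindrome Z -> palindrome (lb :: alpha p p' Z).
Proof. by rewrite /palindrome rev_cons_lb_alpha => ->. Qed.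

Lemma palindrome_of_cons_lb_alpha p p' Z : p <> p' ->
  palindrome (lb :: alpha p p' Z) -> palindrome Z.
Proof.
rewrite /palindrome rev_cons_lb_alpha => neq_pp' [].
exact: alpha_inj.
Qed.

Theorem lemma1 (p p' : nat) :
  1 <= p -> 1 <= p' -> (p = p'.+1 \/ p' = p.+1) ->
  (forall X : word, palindrome X -> factor_of_sturmian X ->
     palindrome (lb :: alpha p p' X)) /\
  (forall X : word, palindrome X -> block_complete p p' (rcons X lb) ->
     forall Z : word, alpha p p' Z = rcons X lb -> palindrome Z).
Proof.
move=> _ _ p_p'_adjacent; split=> [X palX _ | X palX _ Z alphaZ].
  exact: palindrome_cons_lb_alpha.
have neq_pp' : p <> p'.
  by case: p_p'_adjacent => ->; lia.
apply: (palindrome_of_cons_lb_alpha _ _ _ neq_pp').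
by rewrite alphaZ /palindrome rev_cons rev_rcons palX rcons_cons.
Qed.
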